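(* Let $C$ be a free abelian group with basis $\{c_i\mid i\in\mathbb{Z}\}$, so each $x\in C$ is uniquely $x=\sum_{i\in\mathbb{Z}}x_ic_i$ with finitely many nonzero $x_i\in\mathbb{Z}$. For $x,y\in C$ with $y=\sum_i y_ic_i$, define \[\lambda_x(y)=\sum_{i\in\mathbb{Z}}y_i\,c_{i+\sum_{j\in\mathbb{Z}}x_j},\] and define $xy=x+\lambda_x(y)$. Then $(C,+,\cdot)$ is a left brace with $C^{(3)}=\{0\}$, it is generated (as a left brace) by $c_0$, and $C^j\neq\{0\}$ for all $j\in\mathbb{N}$. Moreover, if $A$ is any left brace with $A^{(3)}=\{0\}$ and $b\in A$, there exists a unique left brace epimorphism $\alpha$ from $C$ onto the subbrace of $A$ generated by $b$ with $\alpha(c_0)=b$.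
   Context: A left brace $(A,+,\cdot)$ is a set $A$ with two binary operations such that $(A,+)$ is an abelian group, $(A,\cdot)$ is a group, and $a(b+c)=ab-a+ac$ for all $a,b,c\in A$. In a left brace, $a*b=-a+ab-b$. For subsets $L,M\subseteq A$, $L*M$ is the subgroup of $(A,+)$ generated by $\{l*m\mid l\in L,m\in M\}$. Set $A^{(1)}=A$, $A^{(r+1)}=A^{(r)}*A$, and $A^1=A$, $A^{r+1}=A*A^r$ for $r\ge1$. A subbrace is a subset that is a subgroup of both $(A,+)$ and $(A,\cdot)$; the subbrace generated by an element is the intersection of all subbraces containing it. A left brace homomorphism is a map that is a homomorphism for both operations. *)

From HB Require Import structures.
From mathcomp Require Import all_boot all_order all_algebra.
From mathcomp Require Import freeg.
Set Implicit Arguments. Unset Strict Implicit. Unset Printing Implicit Defensive.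
Import GRing.Theory.
Local Open Scope ring_scope.

Section Brace.
Variables (V : zmodType) (mul : V -> V -> V).

Definition is_mul_identity (e : V) : Prop :=
  forall a, mul e a = a /\ mul a e = a.

Definition is_mul_group : Prop :=
  (forall a b c, mul a (mul b c) = mul (mul a b) c) /\
  exists e, is_mul_identity e /\ forall a, exists a', mul a a' = e /\ mul a' a = e.

Definition is_left_brace : Prop :=
  is_mul_group /\ forall a b c, mul a (b + c) = mul a b - a + mul a c.

Definition bstar (a b : V) : V := - a + mul a b - b.

Definition add_subgroup (S : V -> Prop) : Prop :=
  S 0 /\ (forall x y, S x -> S y -> S (x - y)).

Definition mul_subgroup (S : V -> Prop) : Prop :=
  (forall e, is_mul_identity e -> S e) /\
  (forall x y, S x -> S y -> S (mul x y)) /\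
  (forall x x' e, is_mul_identity e -> S x -> mul x x' = e -> S x').

Definition subbrace (S : V -> Prop) : Prop := add_subgroup S /\ mul_subgroup S.

Definition star_set (L M : V -> Prop) : V -> Prop :=
  fun z => forall H, add_subgroup H ->
    (forall l m, L l -> M m -> H (bstar l m)) -> H z.

Definition setT_ : V -> Prop := fun _ => True.

(* bder n = A^(n) for n >= 1 : A^(1) = A, A^(r+1) = A^(r) * A
   (bder 0 is set to A by convention and never used) *)
Fixpoint bder (n : nat) : V -> Prop :=
  match n with
  | 0 => setT_
  | 1 => setT_
  | S ((S _) as k) => star_set (bder k) setT_
  end.

(* bpow n = A^n for n >= 1 : A^1 = A, A^(r+1) = A * A^r *)
Fixpoint bpow (n : nat) : V -> Prop :=
  match n with
  | 0 => setT_
  | 1 => setT_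
  | S ((S _) as k) => star_set setT_ (bpow k)
  end.

Definition subbrace_gen (b : V) : V -> Prop :=
  fun x => forall S, subbrace S -> S b -> S x.

Definition is_zero_set (S : V -> Prop) : Prop := forall x, S x <-> x = 0.

End Brace.

Definition brace_hom (V W : zmodType) (mulV : V -> V -> V) (mulW : W -> W -> W)
  (f : V -> W) : Prop :=
  (forall x y, f (x + y) = f x + f y) /\ (forall x y, f (mulV x y) = mulW (f x) (f y)).

Definition C := {freeg int / int}.
Definition c (i : int) : C := << i >>.

(* lambda_x(y) = sum_i y_i c_{i + sum_j x_j} ; deg x = sum_j x_j *)
Definition clambda (x y : C) : C :=
  \sum_(i <- dom y) << coeff i y *g (i + deg x) >>.

Definition cmul (x y : C) : C := x + clambda x y.

From HB Require Import structures.
From mathcomp Require Import all_boot all_order all_algebra.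
From mathcomp Require Import freeg.
Set Implicit Arguments. Unset Strict Implicit. Unset Printing Implicit Defensive.
Import GRing.Theory.
Local Open Scope ring_scope.

(* With deg x = sum_j x_j and shift_d the additive map
   c_i |-> c_{i+d}, the product is x y = x + shift_{deg x} y.  As deg is
   additive and shift-invariant and shift_a shift_b = shift_{a+b}, C is a
   left brace; x * y = shift_{deg x} y - y has degree 0, so C^(2) lies in
   ker deg, which acts trivially, whence C^(3) = 0.  The weight c_i |-> 2^i
   (in Q) is preserved by y |-> c_0 * y, so c_0 * (c_0 * ... * c_0) is a
   nonzero element of each C^j.

   In any left brace lambda_a(y) = -a + a y defines
   an action of (A, .) by additive automorphisms; when A^(3) = 0, elements of
   A^(2) act trivially, and lambda becomes a homomorphism on (A, +) as well.
   Given b, the additive map alpha : c_i |-> lambda_{i b}(b) then satisfies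
   lambda_{alpha x} = lambda_{(deg x) b}, which makes it multiplicative.  Its
   image is a subbrace containing b and it lands in every subbrace containing
   b, so it is onto the subbrace generated by b; any homomorphism with
   c_0 |-> b agrees with it on all c_i, since c_{i +- 1} = lambda_{+-c_0}(c_i).
   Finally C is generated by c_0 because, for A = C and b = c_0, alpha is the
   identity. *)

Definition lam (A : zmodType) (mul : A -> A -> A) (a y : A) : A := - a + mul a y.
Arguments lam {A} mul a y.

Section Subbraces.
Variables (A : zmodType) (mul : A -> A -> A) (S : A -> Prop).

Lemma add_subgroupN : add_subgroup S -> forall x, S x -> S (- x).
Proof. by move=> [S0 SB] x Sx; rewrite -sub0r; apply: SB. Qed.

Lemma add_subgroupD : add_subgroup S -> forall x y, S x -> S y -> S (x + y).
Proof.
move=> S_add x y Sx Sy; rewrite -[y]opprK.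
by apply: S_add.2 => //; apply: add_subgroupN.
Qed.

Lemma subbrace_lam : subbrace mul S -> forall a y, S a -> S y -> S (lam mul a y).
Proof.
move=> [S_add [_ [Smul _]]] a y Sa Sy.
by apply: add_subgroupD => //; [apply: add_subgroupN | apply: Smul].
Qed.

End Subbraces.

Section AdditiveMaps.
Variables (V W : zmodType) (f : V -> W).
Hypothesis fD : forall x y, f (x + y) = f x + f y.

Lemma additive0 : f 0 = 0.
Proof. by apply: (addrI (f 0)); rewrite -fD !addr0. Qed.

Lemma additiveN x : f (- x) = - f x.
Proof. by apply: (addrI (f x)); rewrite -fD !subrr additive0. Qed.

End AdditiveMaps.

Section LeftBrace.
Variables (A : zmodType) (mul : A -> A -> A).
Hypothesis A_brace : is_left_brace mul.
Local Notation lam := (lam mul).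

(* The brace axiom says exactly that each lambda_a is additive. *)
Lemma lamD a y z : lam a (y + z) = lam a y + lam a z.
Proof. by case: A_brace => _ Hdistr; rewrite /lam Hdistr !addrA. Qed.

Lemma lam0r a : lam a 0 = 0.
Proof. by apply: (addrI (lam a 0)); rewrite addr0 -lamD addr0. Qed.

Lemma lamN a y : lam a (- y) = - lam a y.
Proof. exact: (additiveN (lamD a)). Qed.

Lemma bmulE a y : mul a y = a + lam a y.
Proof. by rewrite /lam addNKr. Qed.

Lemma bmul0r a : mul a 0 = a.
Proof. by rewrite bmulE lam0r addr0. Qed.

Lemma mul_identity0 e : is_mul_identity mul e -> e = 0.
Proof. by move=> He; rewrite -(bmul0r e); case: (He 0). Qed.

Lemma bmulA a b d : mul a (mul b d) = mul (mul a b) d.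
Proof. by case: A_brace => [[HA _] _]. Qed.

Lemma bmul_identity : is_mul_identity mul 0.
Proof. by case: A_brace => [[_ [e [He _]]] _]; rewrite -(mul_identity0 He). Qed.

Lemma bmul0l a : mul 0 a = a.
Proof. by case: (bmul_identity a). Qed.

Lemma bmul_inv a : exists a', mul a a' = 0 /\ mul a' a = 0.
Proof. by case: A_brace => [[_ [e [/mul_identity0 -> Hinv]]] _]. Qed.

Lemma lamM a b y : lam (mul a b) y = lam a (lam b y).
Proof.
rewrite {1}/lam -bmulA (bmulE a b) (bmulE a (mul b y)) (bmulE b y) lamD.
by rewrite opprD addrACA addNr add0r addKr.
Qed.

Lemma lam0l y : lam 0 y = y.
Proof. by rewrite /lam oppr0 add0r bmul0l. Qed.

Lemma bmulI a : injective (mul a).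
Proof.
move=> y z Hyz; have [a' [_ Ha'a]] := bmul_inv a.
by rewrite -[y]lam0l -[z]lam0l -Ha'a !lamM /lam Hyz.
Qed.

Lemma lam_add_trivial w u : (forall y, lam w y = y) -> forall y, lam (w + u) y = lam u y.
Proof.
move=> Hw y.
have -> : w + u = mul w u by rewrite bmulE Hw.
by rewrite lamM Hw.
Qed.

End LeftBrace.

Section BraceHom.
Variables (V A : zmodType) (mulV : V -> V -> V) (mulA : A -> A -> A) (f : V -> A).
Hypothesis f_hom : brace_hom mulV mulA f.

Lemma hom_lam x y : f (lam mulV x y) = lam mulA (f x) (f y).
Proof. by case: f_hom => fD fM; rewrite /lam fD fM (additiveN fD). Qed.

Hypotheses (V_brace : is_left_brace mulV) (A_brace : is_left_brace mulA).

Lemma hom_image_subbrace : subbrace mulA (fun y => exists x, f x = y).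
Proof.
case: f_hom => fD fM; split.
  split; first by exists 0; exact: additive0 fD.
  by move=> _ _ [x <-] [y <-]; exists (x - y); rewrite fD (additiveN fD).
split; first by move=> e /(mul_identity0 A_brace) ->; exists 0; exact: additive0 fD.
split; first by move=> _ _ [x <-] [y <-]; exists (mulV x y); rewrite fM.
move=> _ y' e /(mul_identity0 A_brace) -> [x <-] Hy'.
have [x' [Hxx' _]] := bmul_inv V_brace x.
exists x'; apply: (@bmulI _ _ A_brace (f x)).
by rewrite Hy' -fM Hxx' (additive0 fD).
Qed.

End BraceHom.

Definition zlift (M : zmodType) (f : int -> M) (x : C) : M :=
  @fglift int (zmodule M) int f x.
Arguments zlift {M} f x.
HB.instance Definition _ (M : zmodType) (f : int -> M) :=
  GRing.isZmodMorphism.Build C M (zlift f) (@lift_is_additive _ _ (zmodule M) f).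

Lemma zliftU (M : zmodType) (f : int -> M) k i : zlift f << k *g i >> = f i *~ k.
Proof. by rewrite /zlift liftU. Qed.

Lemma zliftc (M : zmodType) (f : int -> M) i : zlift f (c i) = f i.
Proof. by rewrite /c zliftU. Qed.

Lemma freegU_c k i : << k *g i >> = c i *~ k.
Proof. by rewrite /c freegU_mulz intz. Qed.

Lemma C_ind (P : C -> Prop) : P 0 -> (forall x y, P x -> P y -> P (x + y)) ->
  (forall x, P x -> P (- x)) -> (forall i, P (c i)) -> forall x, P x.
Proof.
move=> P0 PD PN Pc x; rewrite -(freeg_sumE x).
elim: (dom x) => [|i s IH]; first by rewrite big_nil.
rewrite big_cons freegU_c; apply: (PD) => //.
have Pn (n : nat) : P (c i *+ n).
  by elim: n => [|n IHn]; rewrite ?mulr0n // mulrS; apply: (PD).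
by case: (coeff i x) => n; rewrite ?NegzE ?mulrNz; [apply: Pn | apply/PN/Pn].
Qed.

Lemma deg_c i : deg (c i) = 1.
Proof. exact: degU. Qed.

Notation shift d := (zlift (fun i => c (i + d))).

Lemma shiftc d i : shift d (c i) = c (i + d).
Proof. exact: zliftc. Qed.

Lemma deg_shift d y : deg (shift d y) = deg y.
Proof.
elim/C_ind: y => [|x y Hx Hy|x Hx|i]; rewrite ?raddf0 ?raddfD ?raddfN /= ?Hx ?Hy //.
by rewrite shiftc !deg_c.
Qed.

Lemma shift0 y : shift 0 y = y.
Proof.
elim/C_ind: y => [|x y Hx Hy|x Hx|i]; rewrite ?raddf0 ?raddfD ?raddfN /= ?Hx ?Hy //.
by rewrite shiftc addr0.
Qed.

Lemma shift_shift a b y : shift a (shift b y) = shift (b + a) y.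
Proof.
elim/C_ind: y => [|x y Hx Hy|x Hx|i]; rewrite ?raddf0 ?raddfD ?raddfN /= ?Hx ?Hy //.
by rewrite !shiftc addrA.
Qed.

Lemma cmulE x y : cmul x y = x + shift (deg x) y.
Proof.
rewrite /cmul /clambda; congr (x + _).
rewrite -[in RHS](freeg_sumE y) raddf_sum; apply: eq_bigr => i _ /=.
by rewrite zliftU freegU_c.
Qed.

Lemma deg_cmul x y : deg (cmul x y) = deg x + deg y.
Proof. by rewrite cmulE raddfD /= deg_shift. Qed.

Lemma cmul0 : is_mul_identity cmul 0.
Proof. by move=> a; split; rewrite cmulE ?raddf0 ?addr0 ?deg0 ?shift0 ?add0r. Qed.

Definition cinv (x : C) : C := - shift (- deg x) x.

Lemma cmulV x : cmul x (cinv x) = 0 /\ cmul (cinv x) x = 0.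
Proof.
split; rewrite /cinv cmulE.
  by rewrite raddfN /= shift_shift addNr shift0 subrr.
by rewrite degN deg_shift addNr.
Qed.

(* C is a left brace: associativity comes from shift_shift, the brace
   identity from additivity of shift. *)
Theorem C_brace : is_left_brace cmul.
Proof.
split; last by move=> a b d; rewrite !cmulE raddfD /= [a + _ - a]addrC addKr addrCA.
split.
  move=> a b d; rewrite [RHS]cmulE deg_cmul !cmulE raddfD /= shift_shift !addrA.
  by rewrite [deg b + _]addrC.
by exists 0; split; [exact: cmul0 | move=> a; exists (cinv a); exact: cmulV].
Qed.

Lemma C_lam x y : lam cmul x y = shift (deg x) y.
Proof. by rewrite /lam cmulE addKr. Qed.

(* In C, x * y = shift_{deg x} y - y, which always has degree 0. *)
Lemma C_bstar x y : bstar cmul x y = shift (deg x) y - y.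
Proof. by rewrite /bstar cmulE addKr. Qed.

Lemma C_bder2_deg x : bder cmul 2 x -> deg x = 0.
Proof.
move=> Hx; apply: (Hx (fun z => deg z = 0)).
  by split; [rewrite deg0 | move=> ? ? Ha Hb; rewrite raddfB /= Ha Hb subrr].
by move=> a b _ _; rewrite C_bstar raddfB /= deg_shift subrr.
Qed.

(* Hence elements of C^(2) act trivially and C^(3) = 0. *)
Theorem C_bder3 : is_zero_set (bder cmul 3).
Proof.
move=> x; split => [Hx|->]; last by move=> H [H0 _] _.
apply: (Hx (fun z => z = 0)); first by split => // ? ? -> ->; rewrite subrr.
by move=> l m /C_bder2_deg Hl _; rewrite C_bstar Hl shift0 subrr.
Qed.

(* The weight c_i |-> 2^i: shifting by 1 doubles it, so y |-> c_0 * y preserves it. *)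
Notation weight := (zlift (fun i : int => 2%:R ^ i : rat)).

Lemma weight_shift1 y : weight (shift 1 y) = weight y *+ 2.
Proof.
elim/C_ind: y => [|x y Hx Hy|x Hx|i]; rewrite ?raddf0 ?raddfD ?raddfN /= ?Hx ?Hy.
- by rewrite mul0rn.
- by rewrite mulrnDl.
- by rewrite mulNrn.
by rewrite shiftc !zliftc expfzDr ?expr1z // mulr_natr.
Qed.

Lemma weight_c0_star y : weight (bstar cmul (c 0) y) = weight y.
Proof. by rewrite C_bstar deg_c raddfB /= weight_shift1 mulr2n addrK. Qed.

Definition c0_pow (n : nat) : C := iter n (bstar cmul (c 0)) (c 0).

Lemma weight_c0_pow n : weight (c0_pow n) = 1.
Proof.
elim: n => [|n IH]; first by rewrite zliftc expr0z.
by rewrite /c0_pow iterS -/(c0_pow n) weight_c0_star.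
Qed.

Lemma bpow_c0_pow n : bpow cmul n.+1 (c0_pow n).
Proof. by elim: n => [|n IH] // H _ Hg; rewrite /c0_pow iterS; exact: Hg. Qed.

Theorem C_bpow (j : nat) : (0 < j)%N -> exists x : C, bpow cmul j x /\ x <> 0.
Proof.
case: j => // n _; exists (c0_pow n); split; first exact: bpow_c0_pow.
move=> H0; have := weight_c0_pow n; rewrite H0 raddf0 => /eqP.
by rewrite eq_sym oner_eq0.
Qed.

Lemma int_step_ind (P : int -> Prop) : P 0 ->
  (forall i, P i -> P (i + 1)) -> (forall i, P i -> P (i - 1)) -> forall i, P i.
Proof.
move=> P0 Psucc Ppred; elim/int_rect => [|n IHn|n IHn] //.
  by rewrite intS addrC; apply: Psucc.
by rewrite intS opprD addrC; apply: Ppred.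
Qed.

Section Metabelian.
Variables (A : zmodType) (mul : A -> A -> A).
Hypotheses (A_brace : is_left_brace mul) (A3 : is_zero_set (bder mul 3)).
Local Notation lam := (lam mul).

(* Elements of A^(2) act trivially: (u * v) * y lies in A^(3) = 0. *)
Lemma lam_bstar u v y : lam (bstar mul u v) y = y.
Proof.
have : bder mul 3 (bstar mul (bstar mul u v) y).
  by move=> H _ Hg; apply: Hg => // H' _ Hg'; apply: Hg'.
by move/(A3 _).1/eqP; rewrite subr_eq0 => /eqP.
Qed.

Lemma lam_add a u y : lam (a + u) y = lam a (lam u y).
Proof.
have [a' [Haa' _]] := bmul_inv A_brace a.
have -> : a + u = mul a (lam a' u) by rewrite [RHS]bmulE -(lamM A_brace) Haa' lam0l.
rewrite (lamM A_brace); congr (lam a _).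
have -> : lam a' u = bstar mul a' u + u by rewrite /bstar /lam subrK.
by apply: lam_add_trivial => // z; apply: lam_bstar.
Qed.

Lemma lam_oppl u y : lam (- u) (lam u y) = y.
Proof. by rewrite -lam_add addNr lam0l. Qed.

Lemma lam_oppr u y : lam u (lam (- u) y) = y.
Proof. by rewrite -lam_add subrr lam0l. Qed.

Section Universal.
Variable b : A.

Definition beta (i : int) : A := lam (b *~ i) b.

Definition alpha : C -> A := zlift beta.

Lemma beta_shift i d : beta (i + d) = lam (b *~ d) (beta i).
Proof. by rewrite /beta mulrzDr addrC lam_add. Qed.

Lemma beta0 : beta 0 = b.
Proof. by rewrite /beta mulr0z lam0l. Qed.

(* Each beta_i differs from b by an element of A^(2), so acts like b. *)
Lemma lam_beta i y : lam (beta i) y = lam b y.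
Proof.
have -> : beta i = bstar mul (b *~ i) b + b by rewrite /beta /bstar /lam subrK.
by apply: lam_add_trivial => // z; apply: lam_bstar.
Qed.

(* x |-> lambda_{alpha x} and x |-> lambda_{(deg x) b} agree, both being additive. *)
Lemma lam_alpha x y : lam (alpha x) y = lam (b *~ deg x) y.
Proof.
rewrite /alpha; elim/C_ind: x y => [|x z Hx Hz|x Hx|i] y.
- by rewrite !raddf0.
- by rewrite !raddfD /= !lam_add Hx Hz.
- by rewrite !raddfN /= -{1}[y](lam_oppr (b *~ deg x)) -Hx lam_oppl.
by rewrite zliftc deg_c mulr1z lam_beta.
Qed.

Lemma alpha_lam x y : lam (alpha x) (alpha y) = alpha (shift (deg x) y).
Proof.
rewrite lam_alpha /alpha; elim/C_ind: y => [|y z Hy Hz|y Hy|i].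
- by rewrite !raddf0 lam0r.
- by rewrite !raddfD /= lamD // Hy Hz.
- by rewrite !raddfN /= lamN // Hy.
by rewrite !zliftc beta_shift.
Qed.

(* Hence alpha (x y) = alpha x + lambda_{alpha x}(alpha y) = alpha x . alpha y. *)
Lemma alpha_hom : brace_hom cmul mul alpha.
Proof.
split=> x y; first by rewrite /alpha raddfD.
by rewrite [RHS]bmulE alpha_lam cmulE /alpha raddfD.
Qed.

Lemma alpha_c0 : alpha (c 0) = b.
Proof. by rewrite /alpha zliftc beta0. Qed.

Lemma alpha_in x : subbrace_gen mul b (alpha x).
Proof.
move=> S S_sub Sb; have S_add := S_sub.1.
have Sbeta i : S (beta i).
  elim/int_step_ind: i => [|i Hi|i Hi]; first by rewrite beta0.
    by rewrite beta_shift mulr1z; apply: subbrace_lam.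
  by rewrite beta_shift mulrN1z; apply: subbrace_lam => //; apply: add_subgroupN.
rewrite /alpha; elim/C_ind: x => [|x y Hx Hy|x Hx|i].
- by rewrite raddf0; case: S_add.
- by rewrite raddfD; apply: add_subgroupD.
- by rewrite raddfN; apply: add_subgroupN.
by rewrite zliftc.
Qed.

(* alpha is onto the subbrace generated by b, since its image is a subbrace. *)
Lemma alpha_onto y : subbrace_gen mul b y -> exists x, alpha x = y.
Proof.
move=> Hy; apply: (Hy (fun z => exists x, alpha x = z)).
  exact: hom_image_subbrace alpha_hom C_brace A_brace.
by exists (c 0); exact: alpha_c0.
Qed.

Lemma alpha_unique (f : C -> A) : brace_hom cmul mul f -> f (c 0) = b ->
  forall x, f x = alpha x.
Proof.
move=> f_hom fc0; have [fD _] := f_hom.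
have fc i : f (c i) = beta i.
  elim/int_step_ind: i => [|i Hi|i Hi]; first by rewrite fc0 beta0.
    have := hom_lam f_hom (c 0) (c i); rewrite C_lam deg_c shiftc => ->.
    by rewrite fc0 Hi beta_shift mulr1z.
  have := hom_lam f_hom (- c 0) (c i); rewrite C_lam degN deg_c shiftc => ->.
  by rewrite (additiveN fD) fc0 Hi beta_shift mulrN1z.
elim/C_ind => [|x y Hx Hy|x Hx|i].
- by rewrite (additive0 fD) /alpha raddf0.
- by rewrite fD Hx Hy /alpha raddfD.
- by rewrite (additiveN fD) Hx /alpha raddfN.
by rewrite fc /alpha zliftc.
Qed.

End Universal.
End Metabelian.

(* C is generated by c_0: for A = C and b = c_0 the universal map alpha is the
   identity (by uniqueness), and alpha lands in the subbrace generated by c_0. *)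
Lemma C_gen x : subbrace_gen cmul (c 0) x.
Proof.
have id_alpha : x = alpha cmul (c 0) x.
  by apply: (alpha_unique C_brace C_bder3 (f := id)).
rewrite id_alpha; exact: alpha_in C_brace C_bder3 (c 0) x.
Qed.

Theorem theoremC :
  [/\ is_left_brace cmul,
      is_zero_set (bder cmul 3),
      (forall x : C, subbrace_gen cmul (c 0) x),
      (forall j : nat, (0 < j)%N -> exists x : C, bpow cmul j x /\ x <> 0)
    & forall (A : zmodType) (mulA : A -> A -> A),
        is_left_brace mulA -> is_zero_set (bder mulA 3) ->
        forall b : A,
          exists alpha : C -> A,
            (brace_hom cmul mulA alpha /\
             (forall x, subbrace_gen mulA b (alpha x)) /\
             (forall y, subbrace_gen mulA b y -> exists x, alpha x = y) /\
             alpha (c 0) = b) /\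
            (forall beta : C -> A,
               brace_hom cmul mulA beta /\
               (forall x, subbrace_gen mulA b (beta x)) /\
               (forall y, subbrace_gen mulA b y -> exists x, beta x = y) /\
               beta (c 0) = b ->
               forall x, beta x = alpha x)].
Proof.
split; [exact: C_brace | exact: C_bder3 | exact: C_gen | exact: C_bpow |].
move=> A mulA A_brace A3 b; exists (alpha mulA b); split.
  split; first exact: alpha_hom.
  split; first exact: alpha_in.
  split; first exact: alpha_onto.
  exact: alpha_c0.
by move=> f [f_hom [_ [_ fc0]]]; apply: alpha_unique.
Qed.
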